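(* Let $d\ge2$ and suppose $f:\mathbb{R}^d_+\to\mathbb{R}$ is uniformly continuous with $\mathrm{supp}(f)\subset[0,1]^d$. Let $u,v:\overline{\mathbb{R}^d_+}\to\mathbb{R}$ be continuous, with $u$ a viscosity subsolution and $v$ a viscosity supersolution of \[u_{x_1}\cdots u_{x_d}=f\quad\text{on }\mathbb{R}^d_+,\] and suppose that $u(x)=u(\min(x_1,1),\dots,\min(x_d,1))$ for all $x\in\mathbb{R}^d_+$, and that $v$ is Pareto-monotone. If $u\le v$ on $\partial\mathbb{R}^d_+$, then $u\le v$ on $\mathbb{R}^d_+$.
   Context: $\mathbb{R}^d_+=\{x:x_i>0\ \forall i\}$; $x\leqq y$ means $x_i\le y_i$ for all $i$. A function $v$ is Pareto-monotone if $x\leqq y$ implies $v(x)\le v(y)$. Superdifferential $D^+u(x)$: all $p$ with $u(y)\le u(x)+\langle p,y-x\rangle+o(|y-x|)$ as $y\to x$; subdifferential $D^-u(x)$ defined with $\ge$. A continuous $u$ is a viscosity subsolution of $u_{x_1}\cdots u_{x_d}=f$ on $\mathbb{R}^d_+$ if $p_1\cdots p_d\le f^*(x)$ for all $x\in\mathbb{R}^d_+$, $p\in D^+u(x)$, and a viscosity supersolution if $p_1\cdots p_d\ge f_*(x)$ for all $x\in\mathbb{R}^d_+$, $p\in D^-u(x)$, where $f^*,f_*$ are the upper and lower semicontinuous envelopes of $f$. *)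

From HB Require Import structures.
From mathcomp Require Import all_boot all_order all_algebra.
From mathcomp Require Import all_classical all_reals all_analysis.
Unset Printing Implicit Defensive.
Import Order.TTheory GRing.Theory Num.Theory numFieldNormedType.Exports.
Local Open Scope classical_set_scope.
Local Open Scope ring_scope.

Section Defs.
Variables (R : realType) (d : nat).
Notation V := 'rV[R]_d.

Definition orthant : set V := [set x | forall i : 'I_d, 0 < x ord0 i].
Definition corthant : set V := [set x | forall i : 'I_d, 0 <= x ord0 i].
Definition borthant : set V := corthant `\` orthant.
Definition unit_cube : set V := [set x | forall i : 'I_d, 0 <= x ord0 i <= 1].

Definition pareto_le (x y : V) : Prop := forall i : 'I_d, x ord0 i <= y ord0 i.

Definition pareto_monotone (A : set V) (v : V -> R) : Prop :=
  forall x y, A x -> A y -> pareto_le x y -> v x <= v y.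

Definition dotv (p q : V) : R := \sum_(i < d) p ord0 i * q ord0 i.
Definition prodv (p : V) : R := \prod_(i < d) p ord0 i.

Definition cap1 (x : V) : V := \row_(i < d) Num.min (x ord0 i) 1.

Definition unif_cont_on (A : set V) (f : V -> R) : Prop :=
  forall e : R, 0 < e -> exists2 δ : R, 0 < δ &
    forall x y, A x -> A y -> `|x - y| < δ -> `|f x - f y| < e.

Definition supp (f : V -> R) : set V := closure [set x | orthant x /\ f x != 0].

Definition superdiff (u : V -> R) (x p : V) : Prop :=
  forall e : R, 0 < e -> \forall y \near x, u y <= u x + dotv p (y - x) + e * `|y - x|.
Definition subdiff (u : V -> R) (x p : V) : Prop :=
  forall e : R, 0 < e -> \forall y \near x, u y >= u x + dotv p (y - x) - e * `|y - x|.

Definition usc_env (f : V -> R) (x : V) : \bar R :=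
  ereal_inf [set ereal_sup [set (f y)%:E | y in orthant `&` ball x r]
            | r in [set r : R | 0 < r]].
Definition lsc_env (f : V -> R) (x : V) : \bar R :=
  ereal_sup [set ereal_inf [set (f y)%:E | y in orthant `&` ball x r]
            | r in [set r : R | 0 < r]].

Definition visc_sub (f u : V -> R) : Prop :=
  forall x p, orthant x -> superdiff u x p -> ((prodv p)%:E <= usc_env f x)%E.
Definition visc_super (f v : V -> R) : Prop :=
  forall x p, orthant x -> subdiff v x p -> ((prodv p)%:E >= lsc_env f x)%E.

End Defs.

From HB Require Import structures.
From mathcomp Require Import all_boot all_order all_algebra.
From mathcomp Require Import all_classical all_reals all_analysis.
From mathcomp Require Import ring lra.
Import Order.TTheory GRing.Theory Num.Theory numFieldNormedType.Exports.
Local Open Scope classical_set_scope.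
Local Open Scope ring_scope.

(* Suppose [v x < u x] somewhere; replacing [x] by [cap1 x] we may assume
   [x \in [0,1]^d].  Double the variables and maximise
     Phi(x, y) = u x - v y - th * sum_i y_i - k * sum_i (x_i - y_i + b)^2
   over [0,1]^d x [0,1+b]^d.  Capping a competitor at 1 (resp. 1 + b) leaves [u]
   unchanged, can only decrease [v] and the penalty, so the maximiser (xa, ya) is
   a maximiser over the whole orthant: [p = 2k (xa - ya + b)] is in the
   superdifferential of [u] at [xa] and [p - th] in the subdifferential of [v]
   at [ya].  A large [k] forces [xa < ya] and [|xa - ya| < 2b]; hence [ya] is
   interior, and so is [xa] since [u <= v] on the boundary.  As [v] is
   Pareto-monotone, [p - th >= 0], so [prod p >= prod (p - th) + th^d]; on the
   other hand the two viscosity inequalities and the uniform continuity of [f]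
   bound [prod p - prod (p - th)] by [3 e], which is [th^d] by the choice of [e]. *)

Lemma fst_continuous {X Y : topologicalType} : continuous (@fst X Y).
Proof. by move=> z; exact: cvg_fst. Qed.

Lemma snd_continuous {X Y : topologicalType} : continuous (@snd X Y).
Proof. by move=> z; exact: cvg_snd. Qed.

Section RowVectors.
Context {R : realType} {d : nat}.
Local Notation V := 'rV[R]_d.

Lemma normr_coord_le (x : V) i : `|x ord0 i| <= `|x|.
Proof.
rewrite [X in _ <= X]mx_normrE.
exact: (le_bigmax _ (fun ij : 'I_1 * 'I_d => `|x ij.1 ij.2|) (ord0, i)).
Qed.

Lemma normr_lt_coord (x : V) r : 0 < r -> (forall i, `|x ord0 i| < r) -> `|x| < r.
Proof.
move=> r0 H; rewrite [X in X < _]mx_normrE; apply: bigmax_lt => // -[i j] _.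
by rewrite /= (ord1 i); exact: H.
Qed.

Lemma sqr_coord_le (x : V) i : x ord0 i ^+ 2 <= `|x| ^+ 2.
Proof.
rewrite -real_normK ?num_real //; apply: lerXn2r; rewrite ?nnegrE //.
exact: normr_coord_le.
Qed.

Lemma orthant_nbhs (x : V) : orthant R d x -> \forall y \near x, orthant R d y.
Proof.
move=> ox.
suff H : forall i : 'I_d, \forall y \near x, 0 < (y : V) ord0 i.
  exact: (@filter_forall V 'I_d (fun i (y : V) => 0 < y ord0 i) (nbhs x) _ H).
move=> i; apply/nbhs_ballP; exists (x ord0 i) => //= y.
rewrite -ball_normE /= => xy; have := le_lt_trans (normr_coord_le _ i) xy.
rewrite !mxE ltr_norml => /andP[_]; lra.
Qed.

Definition capc (c : R) (x : V) : V := \row_i Num.min (x ord0 i) c.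
Definition box (c : R) : set V := [set x | forall i, 0 <= x ord0 i <= c].

Lemma capc_le c (x : V) : pareto_le R d (capc c x) x.
Proof. by move=> i; rewrite mxE ge_min lexx. Qed.

Lemma capc_box c (x : V) : 0 <= c -> corthant R d x -> box c (capc c x).
Proof. by move=> c0 cx i; rewrite mxE le_min cx c0 ge_min lexx orbT. Qed.

Lemma box0 {c} : 0 <= c -> box c (0 : V).
Proof. by move=> c0 i; rewrite mxE lexx. Qed.

Lemma box_corthant {c} {x : V} : box c x -> corthant R d x.
Proof. by move=> bx i; case/andP: (bx i). Qed.

Lemma box_compact c : compact (box c).
Proof.
suff -> : box c = [set x : V | forall i, x ord0 i \in `[0, c]].
  by apply: (@rV_compact _ _ (fun=> `[0, c]%classic)) => _; exact: segment_compact.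
by apply/seteqP; split => x /= H i; move: (H i); rewrite in_itv.
Qed.

Lemma box_shift {c b} {x : V} : 0 <= b -> box c x -> box (c + b) (x + const_mx b).
Proof.
by move=> b0 bx i; rewrite !mxE; case/andP: (bx i) => ? ?; apply/andP; split; lra.
Qed.

Lemma sumsqr_le_norm (h : V) : \sum_i h ord0 i ^+ 2 <= d%:R * `|h| ^+ 2.
Proof.
apply: le_trans (_ : \sum_(i < d) `|h| ^+ 2 <= _).
  by apply: ler_sum => i _; exact: sqr_coord_le.
by rewrite sumr_const card_ord mulr_natl.
Qed.

Lemma quad_le_norm (k e : R) (h : V) : 0 <= k -> 0 < e ->
  `|h| < e / (k * d%:R + 1) -> k * \sum_i h ord0 i ^+ 2 <= e * `|h|.
Proof.
move=> k0 e0; have kd0 : 0 < k * d%:R + 1 by rewrite ltr_pwDr // mulr_ge0.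
rewrite ltr_pdivlMr // => hl.
apply: le_trans (_ : k * (d%:R * `|h| ^+ 2) <= _).
  by apply: ler_wpM2l => //; exact: sumsqr_le_norm.
rewrite expr2 !mulrA; apply: ler_wpM2r => //; apply: le_trans (ltW hl).
by rewrite mulrC mulrDr mulr1 lerDl.
Qed.

Lemma superdiff_of_quadratic_ub (u : V -> R) (x p : V) (k : R) :
  0 <= k -> orthant R d x ->
  (forall y, orthant R d y ->
     u y <= u x + dotv R d p (y - x) + k * \sum_i (y - x) ord0 i ^+ 2) ->
  superdiff R d u x p.
Proof.
move=> k0 ox H e e0; have kd0 : 0 < k * d%:R + 1 by rewrite ltr_pwDr // mulr_ge0.
near=> y.
have oy : orthant R d y by near: y; exact: orthant_nbhs.
apply: le_trans (H y oy) _; rewrite lerD2l; apply: quad_le_norm => //.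
near: y; apply/nbhs_ballP; exists (e / (k * d%:R + 1)) => /=; first by rewrite divr_gt0.
by move=> y; rewrite -ball_normE /= distrC.
Unshelve. all: by end_near.
Qed.

Lemma subdiff_of_quadratic_lb (v : V -> R) (x q : V) (k : R) :
  0 <= k -> orthant R d x ->
  (forall y, orthant R d y ->
     v x + dotv R d q (y - x) - k * \sum_i (y - x) ord0 i ^+ 2 <= v y) ->
  subdiff R d v x q.
Proof.
move=> k0 ox H e e0; have kd0 : 0 < k * d%:R + 1 by rewrite ltr_pwDr // mulr_ge0.
near=> y.
have oy : orthant R d y by near: y; exact: orthant_nbhs.
apply: le_trans (H y oy); rewrite lerD2l lerN2; apply: quad_le_norm => //.
near: y; apply/nbhs_ballP; exists (e / (k * d%:R + 1)) => /=; first by rewrite divr_gt0.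
by move=> y; rewrite -ball_normE /= distrC.
Unshelve. all: by end_near.
Qed.

Lemma subdiff_pareto_monotone_ge0 (v : V -> R) (x q : V) :
  pareto_monotone R d (corthant R d) v -> orthant R d x -> subdiff R d v x q ->
  forall i, 0 <= q ord0 i.
Proof.
move=> hmon ox hq i; rewrite leNgt; apply/negP => qi.
have e0 : 0 < - q ord0 i / 2 by rewrite divr_gt0 // oppr_gt0.
have [δ δ0 Hδ] := (nbhs_ballP _ _).1 (filterI (orthant_nbhs _ ox) (hq _ e0)).
pose t := δ / 2; have t0 : 0 < t by rewrite divr_gt0.
pose y := x - \row_j (t * (j == i)%:R).
have yxE j : (y - x) ord0 j = - (t * (j == i)%:R) by rewrite !mxE; ring.
have yx : `|y - x| < δ.
  have tδ : t < δ by rewrite /t ltr_pdivrMr // ltr_pMr // ltr1n.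
  apply: normr_lt_coord => // j; rewrite yxE normrN.
  by case: (j == i); rewrite ?mulr1 ?mulr0 ?normr0 ?gtr0_norm.
have /Hδ[oy vy] : ball x δ y by rewrite -ball_normE /= distrC.
have yx_le : v y <= v x.
  apply: hmon => [j|j|j]; [exact: ltW (oy j)|exact: ltW (ox j)|].
  by rewrite !mxE lerBlDr lerDl mulr_ge0 ?ler0n ?(ltW t0).
have dotE : dotv R d q (y - x) = - (t * q ord0 i).
  rewrite /dotv (bigD1 i) //= big1 ?addr0 => [|j ji]; rewrite yxE.
    by rewrite eqxx mulr1 mulrN mulrC.
  by rewrite (negbTE ji) mulr0 oppr0 mulr0.
rewrite dotE in vy.
have : - q ord0 i / 2 * `|y - x| < - q ord0 i / 2 * (2 * t).
  by rewrite ltr_pM2l // /t; lra.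
have : 0 < t * - q ord0 i by rewrite mulr_gt0 // oppr_gt0.
lra.
Qed.

Lemma usc_env_le (f : V -> R) x e δ : 0 < δ ->
  (forall y, orthant R d y -> `|x - y| < δ -> f y < f x + e) ->
  (usc_env R d f x <= (f x + e)%:E)%E.
Proof.
move=> δ0 H.
apply: le_trans (_ : ereal_sup [set (f y)%:E | y in orthant R d `&` ball x δ] <= _)%E.
  by apply: ereal_inf_lbound; exists δ.
apply/ereal_supP => _ [y [oy +] <-]; rewrite -ball_normE /= => xy.
by rewrite lee_fin ltW // H.
Qed.

Lemma lsc_env_ge (f : V -> R) x e δ : 0 < δ ->
  (forall y, orthant R d y -> `|x - y| < δ -> f x - e < f y) ->
  ((f x - e)%:E <= lsc_env R d f x)%E.
Proof.
move=> δ0 H.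
apply: le_trans (_ : ereal_inf [set (f y)%:E | y in orthant R d `&` ball x δ] <= _)%E;
  last by apply: ereal_sup_ubound; exists δ.
apply: le_ereal_inf_tmp => _ [y [oy +] <-]; rewrite -ball_normE /= => xy.
by rewrite lee_fin ltW // H.
Qed.

Definition pen (b : R) (x y : V) : R := \sum_i (x ord0 i - y ord0 i + b) ^+ 2.
Definition pen_grad (b : R) (x y : V) : V := \row_i (2 * (x ord0 i - y ord0 i + b)).
Definition coord_sum (y : V) : R := \sum_i y ord0 i.

Lemma pen_ge0 b (x y : V) : 0 <= pen b x y.
Proof. by apply: sumr_ge0 => i _; exact: sqr_ge0. Qed.

Lemma pen_shift b (x : V) : pen b x (x + const_mx b) = 0.
Proof. by rewrite /pen big1 // => i _; rewrite !mxE; ring. Qed.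

Lemma pen_expand_l b (x x' y : V) : pen b x y =
  pen b x' y + dotv R d (pen_grad b x' y) (x - x') + \sum_i (x - x') ord0 i ^+ 2.
Proof.
by rewrite /pen /dotv -!big_split /=; apply: eq_bigr => i _; rewrite !mxE; ring.
Qed.

Lemma pen_expand_r b (x y y' : V) : pen b x y =
  pen b x y' - dotv R d (pen_grad b x y') (y - y') + \sum_i (y - y') ord0 i ^+ 2.
Proof.
by rewrite /pen /dotv -sumrB -!big_split /=; apply: eq_bigr => i _; rewrite !mxE; ring.
Qed.

Lemma pen_capc_l b c (x y : V) : (forall i, y ord0 i <= c + b) ->
  pen b (capc c x) y <= pen b x y.
Proof.
move=> yc; apply: ler_sum => i _; rewrite mxE; have := yc i.
by case: (leP (x ord0 i) c) => //; nra.
Qed.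

Lemma pen_capc_r b c (x y : V) : (forall i, x ord0 i + b <= c) ->
  pen b x (capc c y) <= pen b x y.
Proof.
move=> xc; apply: ler_sum => i _; rewrite mxE; have := xc i.
by case: (leP (y ord0 i) c) => //; nra.
Qed.

Lemma pen_lt_coord {b} {x y : V} : 0 <= b -> pen b x y < b ^+ 2 ->
  forall i, `|x ord0 i - y ord0 i + b| < b.
Proof.
move=> b0 pb i; rewrite -(ltr_pXn2r (n := 2)) ?nnegrE // real_normK ?num_real //.
apply: le_lt_trans pb; rewrite /pen (bigD1 i) //= lerDl.
by apply: sumr_ge0 => j _; exact: sqr_ge0.
Qed.

Lemma pen_lt_close {b} {x y : V} : 0 < b -> pen b x y < b ^+ 2 ->
  (forall i, x ord0 i < y ord0 i) /\ `|x - y| < 2 * b.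
Proof.
move=> b0 /(pen_lt_coord (ltW b0)) xyb; split => [i|].
  by move: (xyb i); rewrite ltr_norml => /andP[_]; lra.
apply: normr_lt_coord => [|i]; first by rewrite mulr_gt0.
by move: (xyb i); rewrite !mxE !ltr_norml => /andP[? ?]; apply/andP; split; lra.
Qed.

Lemma coord_sum_ge0 (y : V) : corthant R d y -> 0 <= coord_sum y.
Proof. by move=> cy; apply: sumr_ge0 => i _. Qed.

Lemma coord_sum_capc c (y : V) : coord_sum (capc c y) <= coord_sum y.
Proof. by apply: ler_sum => i _; exact: capc_le. Qed.

Lemma coord_sum_box {c} {x : V} : box c x -> coord_sum x <= d%:R * c.
Proof.
move=> bx; apply: le_trans (_ : \sum_(i < d) c <= _);
  last by rewrite sumr_const card_ord mulr_natl.
by apply: ler_sum => i _; case/andP: (bx i).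
Qed.

Lemma dotvZl a (p h : V) : dotv R d (a *: p) h = a * dotv R d p h.
Proof. by rewrite /dotv mulr_sumr; apply: eq_bigr => i _; rewrite mxE mulrA. Qed.

Lemma dotvBl (p q h : V) : dotv R d (p - q) h = dotv R d p h - dotv R d q h.
Proof. by rewrite /dotv -sumrB; apply: eq_bigr => i _; rewrite !mxE mulrBl. Qed.

Lemma dotv_const c (y y' : V) :
  dotv R d (const_mx c) (y - y') = c * coord_sum y - c * coord_sum y'.
Proof.
by rewrite /dotv -mulrBr -sumrB mulr_sumr; apply: eq_bigr => i _; rewrite !mxE.
Qed.

Definition penalized (u v : V -> R) (th k b : R) (z : V * V) : R :=
  u z.1 - v z.2 - th * coord_sum z.2 - k * pen b z.1 z.2.

Lemma penalized_continuous (u v : V -> R) (A B : set V) th k b :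
  {within A, continuous u} -> {within B, continuous v} ->
  {within A `*` B, continuous penalized u v th k b}.
Proof.
move=> hu hv; apply/continuous_subspace_prodP => z _.
have c1 i : {for z, continuous (fun w : subspace A * subspace B => (w.1 : V) ord0 i)}.
  have := continuous_comp (@incl_subspace_continuous _ A z.1)
    (@coord_continuous R 1 d ord0 i (z.1 : V)).
  exact: continuous_comp (@fst_continuous (subspace A) (subspace B) z).
have c2 i : {for z, continuous (fun w : subspace A * subspace B => (w.2 : V) ord0 i)}.
  have := continuous_comp (@incl_subspace_continuous _ B z.2)
    (@coord_continuous R 1 d ord0 i (z.2 : V)).
  exact: continuous_comp (@snd_continuous (subspace A) (subspace B) z).
apply: cvgB; [apply: cvgB; [apply: cvgB|]|].
- exact: continuous_comp (@fst_continuous (subspace A) (subspace B) z) (hu z.1).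
- exact: continuous_comp (@snd_continuous (subspace A) (subspace B) z) (hv z.2).
- apply: cvgM; first exact: cvg_cst.
  by apply: cvg_big => //; [exact: add_continuous | move=> i _; exact: c2].
- apply: cvgM; first exact: cvg_cst.
  apply: cvg_big => //; first exact: add_continuous.
  move=> i _; have cai : {for z, continuous (fun w : subspace A * subspace B =>
    (w.1 : V) ord0 i - (w.2 : V) ord0 i + b)}.
    by apply: cvgD; [apply: cvgB; [exact: c1 | exact: c2] | exact: cvg_cst].
  by apply: cvgM; exact: cai.
Qed.

Lemma penalized_shift_ge (u v : V -> R) th k b (x : V) : 0 <= th -> 0 <= b <= 1 ->
  box 1 x -> u x - v (x + const_mx b) - th * (2 * d%:R) <=
    penalized u v th k b (x, x + const_mx b).
Proof.
move=> th0 /andP[b0 b1] bx; rewrite /penalized /= pen_shift mulr0 subr0 lerD2l lerN2.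
rewrite ler_wpM2l //; apply: le_trans (coord_sum_box (box_shift b0 bx)) _.
by rewrite [X in _ <= X]mulrC ler_wpM2l //; lra.
Qed.
End RowVectors.

Lemma prodr_add_ge (R : realDomainType) n (a : 'I_n -> R) t : (0 < n)%N ->
  0 <= t -> (forall i, 0 <= a i) -> \prod_i a i + t ^+ n <= \prod_i (a i + t).
Proof.
case: n a => // n + _; elim: n => [|n IH] a t0 a0; first by rewrite !big_ord1 expr1.
rewrite big_ord_recr [X in _ <= X]big_ord_recr /= exprSr.
have := IH (fun i => a (widen_ord (leqnSn _) i)) t0 (fun i => a0 _).
set A := \prod_(i < n.+1) _; set B := \prod_(i < n.+1) _ => AB.
have A0 : 0 <= A by apply: prodr_ge0.
have := a0 ord_max; set c := a ord_max => c0.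
apply: le_trans (_ : (A + t ^+ n.+1) * (c + t) <= _); last first.
  by rewrite ler_wpM2r ?addr_ge0.
have : 0 <= A * t by exact: mulr_ge0.
have : 0 <= t ^+ n.+1 * c by rewrite mulr_ge0 ?exprn_ge0.
rewrite mulrDl !mulrDr; lra.
Qed.

Section PenalizedMax.
Context {R : realType} {d : nat} {u v : 'rV[R]_d -> R} {th k b : R}.
Local Notation V := 'rV[R]_d.
Local Notation Phi := (penalized u v th k b).
Hypotheses (th0 : 0 <= th) (k0 : 0 < k) (b0 : 0 < b).
Hypothesis u_cap : forall x, orthant R d x -> u x = u (capc 1 x).
Hypothesis v_mon : pareto_monotone R d (corthant R d) v.
Context {xa ya : V}.
Hypotheses (xa_box : box 1 xa) (ya_box : box (1 + b) ya).
Hypothesis Phi_max :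
  forall x y, box 1 x -> box (1 + b) y -> Phi (x, y) <= Phi (xa, ya).

Lemma penalized_max_superdiff :
  orthant R d xa -> superdiff R d u xa (k *: pen_grad b xa ya).
Proof.
move=> oxa; apply: (superdiff_of_quadratic_ub _ _ _ _ (ltW k0) oxa) => y oy.
(* Capping [y] at 1 leaves [u y] unchanged and lowers the penalty, so the
   maximality of [(xa, ya)] on the box controls [u y] on the whole orthant. *)
have bcy : box 1 (capc 1 y) by apply: capc_box => // i; exact: ltW.
have := Phi_max _ _ bcy ya_box; rewrite /penalized /= -u_cap //.
have : k * pen b (capc 1 y) ya <= k * pen b y ya.
  by rewrite ler_wpM2l ?(ltW k0) // pen_capc_l // => i; case/andP: (ya_box i).
rewrite (pen_expand_l b y xa ya) dotvZl; lra.
Qed.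

Lemma penalized_max_subdiff : orthant R d ya ->
  subdiff R d v ya (k *: pen_grad b xa ya - const_mx th).
Proof.
move=> oya; apply: (subdiff_of_quadratic_lb _ _ _ _ (ltW k0) oya) => y oy.
have cy : corthant R d y by move=> i; exact: ltW.
have bcy : box (1 + b) (capc (1 + b) y) by apply: capc_box; rewrite // addr_ge0 ?ltW.
have := Phi_max _ _ xa_box bcy; rewrite /penalized /=.
have : v (capc (1 + b) y) <= v y.
  by apply: v_mon => //; [exact: box_corthant bcy | exact: capc_le].
have : th * coord_sum (capc (1 + b) y) <= th * coord_sum y.
  by rewrite ler_wpM2l // coord_sum_capc.
have : k * pen b xa (capc (1 + b) y) <= k * pen b xa y.
  rewrite ler_wpM2l ?(ltW k0) // pen_capc_r // => i.
  by case/andP: (xa_box i) => _; rewrite lerD2r.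
rewrite (pen_expand_r b xa y ya) dotvBl dotvZl dotv_const; lra.
Qed.

Lemma penalized_pos_pen_lt : 0 < Phi (xa, ya) ->
  (forall x, box 1 x -> u x - v 0 <= k * b ^+ 2) -> pen b xa ya < b ^+ 2.
Proof.
move=> Phi0 ub; rewrite -(ltr_pM2l k0).
have cya : corthant R d ya := box_corthant ya_box.
have : v 0 <= v ya by apply: v_mon => // i; rewrite mxE.
have : 0 <= th * coord_sum ya by rewrite mulr_ge0 ?coord_sum_ge0.
move: Phi0 (ub _ xa_box); rewrite /penalized /=; lra.
Qed.

Lemma penalized_pos_orthant : 0 < Phi (xa, ya) ->
  (forall x, borthant R d x -> u x <= v x) -> pareto_le R d xa ya ->
  orthant R d xa.
Proof.
move=> Phi0 hbd xya; apply: contrapT => noxa.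
have cxa : corthant R d xa := box_corthant xa_box.
have cya : corthant R d ya := box_corthant ya_box.
have := hbd xa (conj cxa noxa).
have : v xa <= v ya by exact: v_mon.
have : 0 <= th * coord_sum ya by rewrite mulr_ge0 ?coord_sum_ge0.
have : 0 <= k * pen b xa ya by rewrite mulr_ge0 ?pen_ge0 ?(ltW k0).
move: Phi0; rewrite /penalized /=; lra.
Qed.

End PenalizedMax.

Section ContinuousOnOrthant.
Context {R : realType} {d : nat}.
Local Notation V := 'rV[R]_d.
Variables u v : V -> R.
Hypotheses (u_cont : {within corthant R d, continuous u})
  (v_cont : {within corthant R d, continuous v}).

Lemma box_ub c : 0 <= c -> exists U, forall x, box c x -> u x <= U.
Proof.
move=> c0; have [xu _ xumax] := compact_EVT_max (ex_intro _ _ (box0 c0))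
  (box_compact c) (continuous_subspaceW (fun x => box_corthant) u_cont).
by exists (u xu) => x bx; apply: xumax; rewrite inE.
Qed.

Lemma penalized_box_max th k b c c' : 0 <= c -> 0 <= c' ->
  exists xa ya, [/\ box c xa, box c' ya & forall x y, box c x -> box c' y ->
    penalized u v th k b (x, y) <= penalized u v th k b (xa, ya)].
Proof.
move=> c0 c'0; have [[xa ya] + zmax] : exists2 z, z \in box c `*` box c' &
    forall z', z' \in box c `*` box c' ->
      penalized u v th k b z' <= penalized u v th k b z.
  apply: compact_EVT_max; first by exists (0, 0); split; exact: box0.
    exact: compact_setX (box_compact c) (box_compact c').
  apply: penalized_continuous.
  - by apply: continuous_subspaceW u_cont => x; exact: box_corthant.
  - by apply: continuous_subspaceW v_cont => x; exact: box_corthant.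
rewrite inE => -[bxa bya]; exists xa, ya; split => // x y bx by'.
by apply: zmax; rewrite inE.
Qed.

Lemma shift_continuous_lt (x : V) eps r : corthant R d x -> 0 < eps -> 0 < r ->
  exists2 b, 0 < b <= r & v (x + const_mx b) < v x + eps.
Proof.
move=> cx eps0 r0; have /subspace_continuousP /(_ x cx) := v_cont.
move=> /cvgrPdist_lt /(_ eps eps0) /nbhs_ballP[ρ ρ0 vρ].
pose b := Num.min r (ρ / 2).
have b0 : 0 < b by rewrite lt_min r0 divr_gt0.
have bρ : b < ρ.
  apply: le_lt_trans (_ : ρ / 2 < _); first by rewrite ge_min lexx orbT.
  by rewrite ltr_pdivrMr // ltr_pMr // ltr1n.
exists b; first by rewrite b0 ge_min lexx.
have cxb : corthant R d (x + const_mx b) by move=> i; rewrite !mxE addr_ge0 ?cx ?(ltW b0).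
have : ball x ρ (x + const_mx b).
  rewrite -ball_normE /=; apply: normr_lt_coord => // i.
  by rewrite !mxE opprD addrA subrr add0r normrN gtr0_norm.
by move=> /vρ /(_ cxb); rewrite ltr_distlC => /andP[_].
Qed.
End ContinuousOnOrthant.

Lemma viscosity_gap {R : realType} {d : nat} {f u v : 'rV[R]_d -> R} {xa ya q : 'rV[R]_d}
  {th e δ : R} :
  (0 < d)%N -> visc_sub R d f u -> visc_super R d f v ->
  orthant R d xa -> orthant R d ya ->
  superdiff R d u xa (q + const_mx th) -> subdiff R d v ya q ->
  (forall i, 0 <= q ord0 i) -> 0 <= th -> 0 < δ ->
  (forall x y, orthant R d x -> orthant R d y -> `|x - y| < δ -> `|f x - f y| < e) ->
  `|xa - ya| < δ -> th ^+ d < 3 * e.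
Proof.
move=> d0 hsub hsup oxa oya hp hq q0 th0 δ0 hf xyδ.
have fp : prodv R d (q + const_mx th) <= f xa + e.
  rewrite -lee_fin; apply: le_trans (hsub _ _ oxa hp) _.
  apply: (usc_env_le _ _ _ _ δ0) => y oy xy.
  by move: (hf _ _ oxa oy xy); rewrite ltr_distlC => /andP[_].
have fq : f ya - e <= prodv R d q.
  rewrite -lee_fin; apply: le_trans _ (hsup _ _ oya hq).
  apply: (lsc_env_ge _ _ _ _ δ0) => y oy xy.
  by move: (hf _ _ oya oy xy); rewrite ltr_distlC => /andP[].
have pq : prodv R d q + th ^+ d <= prodv R d (q + const_mx th).
  rewrite /prodv; under [X in _ <= X]eq_bigr do rewrite !mxE.
  exact: prodr_add_ge.
move: (hf _ _ oxa oya xyδ); rewrite ltr_distlC => /andP[]; lra.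
Qed.

Section Comparison.
Context {R : realType} {d : nat}.
Local Notation V := 'rV[R]_d.
Context {f u v : V -> R}.
Hypotheses (d0 : (0 < d)%N) (f_uc : unif_cont_on R d (orthant R d) f)
  (u_cont : {within corthant R d, continuous u})
  (v_cont : {within corthant R d, continuous v})
  (u_sub : visc_sub R d f u) (v_super : visc_super R d f v)
  (u_cap : forall x, orthant R d x -> u x = u (capc 1 x))
  (v_mon : pareto_monotone R d (corthant R d) v)
  (u_le_v_boundary : forall x, borthant R d x -> u x <= v x).

Lemma penalized_max_gap {th k b : R} {xa ya : V} {e δ : R} :
  0 < th -> 0 < k -> 0 < b -> box 1 xa -> box (1 + b) ya ->
  (forall x y, box 1 x -> box (1 + b) y ->
     penalized u v th k b (x, y) <= penalized u v th k b (xa, ya)) ->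
  0 < penalized u v th k b (xa, ya) ->
  (forall x, box 1 x -> u x - v 0 <= k * b ^+ 2) ->
  0 < δ -> 2 * b <= δ ->
  (forall x y, orthant R d x -> orthant R d y -> `|x - y| < δ -> `|f x - f y| < e) ->
  th ^+ d < 3 * e.
Proof.
move=> th0 k0 b0 bxa bya Phi_max Phi_pos ub δ0 bδ hδ.
have [xya xyb] := pen_lt_close b0
  (penalized_pos_pen_lt (ltW th0) k0 v_mon bxa bya Phi_pos ub).
have oya : orthant R d ya by move=> i; apply: le_lt_trans (xya i); case/andP: (bxa i).
have oxa := penalized_pos_orthant (ltW th0) k0 v_mon bxa bya Phi_pos u_le_v_boundary
  (fun i => ltW (xya i)).
have hq := penalized_max_subdiff (ltW th0) k0 b0 v_mon bxa Phi_max oya.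
have hp := penalized_max_superdiff k0 u_cap bya Phi_max oxa.
rewrite -[k *: _](subrK (const_mx th)) in hp.
apply: (viscosity_gap d0 u_sub v_super oxa oya hp hq _ (ltW th0) δ0 hδ).
- exact: subdiff_pareto_monotone_ge0 v_mon oya hq.
- exact: lt_le_trans xyb bδ.
Qed.

Lemma comparison_in_unit_cube {x : V} : orthant R d x -> box 1 x -> u x <= v x.
Proof.
move=> ox bx; rewrite leNgt; apply/negP; rewrite -subr_gt0 => gap.
set g := u x - v x in gap.
have dR : 0 < d%:R :> R by rewrite ltr0n.
pose th := g / (8 * d%:R); pose e := th ^+ d / 3.
have th0 : 0 < th by rewrite divr_gt0 // mulr_gt0.
have [δ δ0 hδ] := f_uc e (divr_gt0 (exprn_gt0 _ th0) (ltr0n _ 3)).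
have [b /andP[b0]] : exists2 b, 0 < b <= Num.min 1 (δ / 2) &
    v (x + const_mx b) < v x + g / 4.
  apply: shift_continuous_lt => //; first exact: box_corthant bx.
    by rewrite divr_gt0.
  by rewrite lt_min ltr01 divr_gt0.
rewrite le_min => /andP[b1 bδ] vb.
have [U hU] := box_ub u u_cont 1 ler01.
pose k := (`|U - v 0| + 1) / b ^+ 2.
have k0 : 0 < k by rewrite divr_gt0 ?exprn_gt0 // ltr_pwDr.
have [xa [ya [bxa bya Phi_max]]] :=
  penalized_box_max u v u_cont v_cont th k b 1 (1 + b) ler01 (addr_ge0 ler01 (ltW b0)).
have Phi_pos : 0 < penalized u v th k b (xa, ya).
  apply: lt_le_trans (Phi_max _ _ bx (box_shift (ltW b0) bx)).
  apply: lt_le_trans (penalized_shift_ge u v th k b x (ltW th0) _ bx); last first.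
    by rewrite (ltW b0).
  have -> : th * (2 * d%:R) = g / 4 by rewrite /th; field; rewrite gt_eqF.
  by move: gap vb; rewrite /g; lra.
have ub y : box 1 y -> u y - v 0 <= k * b ^+ 2.
  move=> bxy; rewrite /k divfK ?expf_neq0 ?gt_eqF //.
  by have := hU y bxy; have := ler_norm (U - v 0); lra.
have : th ^+ d < 3 * e.
  by apply: (penalized_max_gap th0 k0 b0 bxa bya Phi_max Phi_pos ub δ0 _ hδ); lra.
by rewrite /e mulrC divfK ?ltxx.
Qed.

End Comparison.

Theorem theorem2p8 (R : realType) (d : nat) (f u v : 'rV[R]_d -> R) :
  (2 <= d)%N ->
  @unif_cont_on R d (orthant R d) f ->
  @supp R d f `<=` unit_cube R d ->
  {within corthant R d, continuous u} ->
  {within corthant R d, continuous v} ->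
  @visc_sub R d f u ->
  @visc_super R d f v ->
  (forall x, orthant R d x -> u x = u (@cap1 R d x)) ->
  @pareto_monotone R d (corthant R d) v ->
  (forall x, borthant R d x -> u x <= v x) ->
  forall x, orthant R d x -> u x <= v x.
Proof.
move=> d2 hf _ hu hv hsub hsup hcap hmon hbd x ox.
have cx : corthant R d x by move=> i; exact: ltW.
have ocx : orthant R d (capc 1 x) by move=> i; rewrite mxE lt_min ox ltr01.
have bcx : box 1 (capc 1 x) by exact: capc_box.
have : v (capc 1 x) <= v x.
  by apply: hmon => //; [exact: box_corthant bcx | exact: capc_le].
have d0 : (0 < d)%N by exact: ltnW.
have := comparison_in_unit_cube d0 hf hu hv hsub hsup hcap hmon hbd ocx bcx.
rewrite -(hcap _ ox); exact: le_trans.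
Qed.
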